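(* There exist a spatial constraint system $(\mathrm{Con},\sqsubseteq,(s_i)_{i\in G})$ with distributed spaces $(\Delta_I)_{I\subseteq G}$, elements $c,e\in\mathrm{Con}$ and a set $I\subseteq G$ such that (1) $e$ is compact, (2) $c\sqsupseteq\Delta_I(e)$, and (3) there is no finite subset $J\subseteq I$ with $c\sqsupseteq\Delta_J(e)$.
   Context: A constraint system (cs) is a complete lattice $(\mathrm{Con},\sqsubseteq)$ with join $\sqcup$, bottom $\mathit{true}$. A space function is a continuous (directed-join preserving) self-map $f$ on $\mathrm{Con}$ with $f(\mathit{true})=\mathit{true}$ and $f(c\sqcup d)=f(c)\sqcup f(d)$; $\mathcal{S}(\mathrm{Con})$ denotes the set of space functions ordered pointwise ($f\preceq g$ iff $f(c)\sqsubseteq g(c)$ for all $c$). A spatial constraint system $(\mathrm{Con},\sqsubseteq,(s_i)_{i\in G})$ is a cs with space functions $s_i$ indexed by an arbitrary set $G$. Distributed spaces: $\Delta_I=\max\{f\in\mathcal{S}(\mathrm{Con}) : f\preceq s_i\text{ for all }i\in I\}$ (this maximum exists). An element $e$ is compact if for every directed $D\subseteq\mathrm{Con}$, $e\sqsubseteq\bigsqcup D$ implies $e\sqsubseteq d$ for some $d\in D$. *)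

(* sets are predicates [T -> Prop]. *)
From Stdlib Require Import List.

Record cs := {
  Con :> Type;
  le : Con -> Con -> Prop;
  le_refl : forall x, le x x;
  le_trans : forall x y z, le x y -> le y z -> le x z;
  le_antisym : forall x y, le x y -> le y x -> x = y;
  sup : (Con -> Prop) -> Con;
  sup_ub : forall (S : Con -> Prop) x, S x -> le x (sup S);
  sup_least : forall (S : Con -> Prop) y,
      (forall x, S x -> le x y) -> le (sup S) y
}.

Arguments le {c} _ _.
Arguments sup {c} _.

Definition join {C : cs} (c d : C) : C := sup (fun x => x = c \/ x = d).
Definition ctrue {C : cs} : C := sup (fun _ => False).

Definition directed {C : cs} (D : C -> Prop) : Prop :=
  (exists d, D d) /\
  (forall x y, D x -> D y -> exists z, D z /\ le x z /\ le y z).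

Definition image {C : cs} (f : C -> C) (D : C -> Prop) : C -> Prop :=
  fun y => exists x, D x /\ y = f x.

Definition continuous {C : cs} (f : C -> C) : Prop :=
  forall D : C -> Prop, directed D -> f (sup D) = sup (image f D).

Definition space_function {C : cs} (f : C -> C) : Prop :=
  continuous f /\ f ctrue = ctrue /\ (forall c d, f (join c d) = join (f c) (f d)).

Definition fle {C : cs} (f g : C -> C) : Prop := forall c, le (f c) (g c).

Definition compact {C : cs} (e : C) : Prop :=
  forall D : C -> Prop, directed D -> le e (sup D) -> exists d, D d /\ le e d.

Definition spatial {C : cs} {G : Type} (s : G -> C -> C) : Prop :=
  forall i, space_function (s i).

Definition is_distributed_space {C : cs} {G : Type} (s : G -> C -> C)
    (I : G -> Prop) (f : C -> C) : Prop :=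
  (space_function f /\ forall i, I i -> fle f (s i)) /\
  (forall g, space_function g -> (forall i, I i -> fle g (s i)) -> fle g f).

Definition finite_subset {G : Type} (J I : G -> Prop) : Prop :=
  (exists l : list G, forall x, J x -> In x l) /\ (forall x, J x -> I x).

From Stdlib Require Import List Lia FunctionalExtensionality PropExtensionality.

(* In any complete lattice Δ_I exists: it is the pointwise join of all space
   functions below every s_i (i ∈ I), and this join is again a space function.
   The counterexample lives in the powerset of ℕ.  Take e = {0} (compact) and
   s_i(A) = [i, ∞) if 0 ∈ A, ∅ otherwise.  A space function below every s_i
   sends e into ⋂_i [i, ∞) = ∅, so Δ_ℕ(e) = ∅ =: c; but for finite J ⊆ ℕ with
   bound k, s_k lies below every s_j (j ∈ J), so k ∈ s_k(e) ⊆ Δ_J(e) ⋢ c. *)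

Section ConstraintSystem.
Variable C : cs.

Lemma join_ubl (c d : C) : le c (join c d).
Proof. apply sup_ub; auto. Qed.

Lemma join_ubr (c d : C) : le d (join c d).
Proof. apply sup_ub; auto. Qed.

Lemma join_least (c d y : C) : le c y -> le d y -> le (join c d) y.
Proof. intros Hc Hd; apply sup_least; intros x [-> | ->]; assumption. Qed.

Lemma ctrue_least (x : C) : le ctrue x.
Proof. apply sup_least; intros _ []. Qed.

Lemma join_idr (x y : C) : le x y -> join x y = y.
Proof.
  intros Hxy; apply le_antisym.
  - apply join_least; [exact Hxy | apply le_refl].
  - apply join_ubr.
Qed.

Lemma space_function_mono (f : C -> C) :
  space_function f -> forall x y, le x y -> le (f x) (f y).
Proof.
  intros [_ [_ f_join]] x y Hxy.
  rewrite <- (join_idr x y Hxy), f_join; apply join_ubl.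
Qed.

End ConstraintSystem.

Section DistributedSpace.
Context {C : cs} {G : Type} (s : G -> C -> C).

Definition below_spaces (I : G -> Prop) (g : C -> C) : Prop :=
  space_function g /\ forall i, I i -> fle g (s i).

Definition Delta (I : G -> Prop) (c : C) : C :=
  sup (fun y => exists g, below_spaces I g /\ y = g c).

Lemma Delta_ub I g c : below_spaces I g -> le (g c) (Delta I c).
Proof. intros Hg; apply sup_ub; eauto. Qed.

Lemma Delta_least I c y :
  (forall g, below_spaces I g -> le (g c) y) -> le (Delta I c) y.
Proof. intros Hy; apply sup_least; intros z [g [Hg ->]]; auto. Qed.

Lemma Delta_mono I x y : le x y -> le (Delta I x) (Delta I y).
Proof.
  intros Hxy; apply Delta_least; intros g Hg.
  eapply le_trans; [apply (space_function_mono _ g (proj1 Hg) _ _ Hxy) |].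
  now apply Delta_ub.
Qed.

Lemma Delta_continuous I : continuous (Delta I).
Proof.
  intros D HD; apply le_antisym.
  - apply Delta_least; intros g Hg.
    rewrite (proj1 (proj1 Hg) D HD).
    apply sup_least; intros w [d [Hd ->]].
    eapply le_trans; [now apply (Delta_ub I g d) |].
    apply sup_ub; now exists d.
  - apply sup_least; intros w [d [Hd ->]].
    apply Delta_mono, sup_ub, Hd.
Qed.

Lemma Delta_space_function I : space_function (Delta I).
Proof.
  split; [apply Delta_continuous | split].
  - apply le_antisym; [| apply ctrue_least].
    apply Delta_least; intros g [[_ [-> _]] _]; apply le_refl.
  - intros c d; apply le_antisym.
    + apply Delta_least; intros g Hg.
      rewrite (proj2 (proj2 (proj1 Hg))).
      apply join_least; eapply le_trans;
        [apply (Delta_ub I g c Hg) | apply join_ubl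
        | apply (Delta_ub I g d Hg) | apply join_ubr].
    + apply join_least; apply Delta_mono; [apply join_ubl | apply join_ubr].
Qed.

Lemma Delta_is_distributed_space I : is_distributed_space s I (Delta I).
Proof.
  split; [split |].
  - apply Delta_space_function.
  - intros i Hi c; apply Delta_least; intros g [_ Hg]; now apply Hg.
  - intros g Hg HgI c; now apply Delta_ub.
Qed.

End DistributedSpace.

Section Powerset.
Variable T : Type.

Definition subset (A B : T -> Prop) : Prop := forall x, A x -> B x.

Lemma subset_antisym (A B : T -> Prop) : subset A B -> subset B A -> A = B.
Proof.
  intros HAB HBA; apply functional_extensionality; intros x.
  apply propositional_extensionality; split; auto.
Qed.

Definition powerset_cs : cs.
Proof.
  refine (Build_cs (T -> Prop) subset _ _ subset_antisym
            (fun S x => exists A, S A /\ A x) _ _);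
    unfold subset; firstorder.
Defined.

Lemma singleton_compact (a : T) : @compact powerset_cs (fun x => x = a).
Proof.
  intros D _ Ha; destruct (Ha a eq_refl) as [A [HA Aa]].
  exists A; split; [exact HA | now intros x ->].
Qed.

Definition guard (a : T) (U : T -> Prop) (A : powerset_cs) : powerset_cs :=
  fun x => A a /\ U x.

Lemma guard_space_function a U : space_function (guard a U).
Proof.
  unfold guard; split; [| split].
  - intros D _; apply subset_antisym; intros x; simpl; unfold image.
    + intros [[A [HA Aa]] Ux]; exists (fun y => A a /\ U y); eauto.
    + intros [B [[A [HA ->]] [Aa Ux]]]; eauto.
  - apply subset_antisym; unfold subset; simpl; firstorder.
  - intros c d; apply subset_antisym; intros x; simpl.
    + intros [[A [[-> | ->] Aa]] Ux];
        [exists (fun y => c a /\ U y) | exists (fun y => d a /\ U y)]; auto.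
    + intros [B [[-> | ->] [Aa Ux]]]; split; eauto.
Qed.

End Powerset.

Lemma list_max_ge (l : list nat) x : In x l -> x <= list_max l.
Proof.
  apply (proj1 (Forall_forall (fun k => k <= list_max l) l)), list_max_le, le_n.
Qed.

Definition tail_guard (i : nat) : powerset_cs nat -> powerset_cs nat :=
  guard nat 0 (fun n => i <= n).

Lemma tail_guard_spatial : spatial tail_guard.
Proof. intros i; apply guard_space_function. Qed.

Lemma tail_guard_antitone i j : i <= j -> fle (tail_guard j) (tail_guard i).
Proof. intros Hij A x [A0 Hx]; split; [exact A0 | lia]. Qed.

Lemma Delta_tail_guard_full_empty (e : powerset_cs nat) :
  le (Delta tail_guard (fun _ => True) e) (fun _ => False).
Proof.
  apply Delta_least; intros g [_ Hg] n Hn.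
  destruct (Hg (S n) I e n Hn); lia.
Qed.

Lemma Delta_tail_guard_finite_nonempty (J : nat -> Prop) (e : powerset_cs nat) :
  (exists l : list nat, forall x, J x -> In x l) -> e 0 ->
  exists n, Delta tail_guard J e n.
Proof.
  intros [l Hl] e0; exists (list_max l).
  apply (Delta_ub tail_guard J (tail_guard (list_max l))); [split |].
  - apply tail_guard_spatial.
  - intros j Hj; apply tail_guard_antitone.
    apply list_max_ge, Hl, Hj.
  - split; [exact e0 | apply le_n].
Qed.

Theorem mainTheorem5 :
  exists (C : cs) (G : Type) (s : G -> C -> C) (Delta : (G -> Prop) -> C -> C),
    spatial s /\
    (forall I : G -> Prop, is_distributed_space s I (Delta I)) /\
    exists (c e : C) (I : G -> Prop),
      compact e /\
      le (Delta I e) c /\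
      ~ (exists J : G -> Prop, finite_subset J I /\ le (Delta J e) c).
Proof.
  exists (powerset_cs nat), nat, tail_guard, (Delta tail_guard).
  split; [exact tail_guard_spatial |].
  split; [apply Delta_is_distributed_space |].
  exists (fun _ => False), (fun n => n = 0), (fun _ => True).
  split; [apply singleton_compact |].
  split; [apply Delta_tail_guard_full_empty |].
  intros [J [[Jfin _] HJ]].
  destruct (Delta_tail_guard_finite_nonempty J (fun n => n = 0) Jfin eq_refl) as [n Hn].
  exact (HJ n Hn).
Qed.
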